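(* Let $M,N\ge1$, let $T_1,\dots,T_N\in\mathcal{L}(\ell^\infty_M,\mathbb{R})$, let $\mathscr{T}=\{T_n:1\le n\le N\}$, and let $A:\ell^\infty_M\to\ell^\infty_N$ be given by $Ax=(T_nx)_{n=1}^N$. Then $\mathcal{R}^2(\mathscr{T})=\pi_2(A)$.
   Context: $\ell^\infty_M$ is $\mathbb{R}^M$ with max norm, viewed as a Banach lattice with coordinatewise order. The $\ell^2$-bound $\mathcal{R}^2(\mathscr{T})$ is the least $C$ such that $\|(\sum_{i=1}^k|S_ix_i|^2)^{1/2}\|\le C\|(\sum_{i=1}^k|x_i|^2)^{1/2}\|$ for all $k$, all $S_1,\dots,S_k\in\mathscr{T}$ (not necessarily distinct) and all $x_1,\dots,x_k$. For $A\in\mathcal{L}(X,Y)$, $\pi_2(A)$ (the 2-summing norm) is the least $C$ such that $(\sum_{n=1}^k\|Ax_n\|^2)^{1/2}\le C\sup\{(\sum_{n=1}^k|\langle x_n,x^*\rangle|^2)^{1/2}:\|x^*\|_{X^*}\le1\}$ for all $k$ and $x_1,\dots,x_k\in X$. *)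

From Stdlib Require Import Reals List.
Open Scope R_scope.

Fixpoint rsum (k : nat) (f : nat -> R) : R :=
  match k with O => 0 | S k' => rsum k' f + f k' end.

(* Vectors of l^inf_M are functions nat -> R; only coordinates 0..M-1 matter. *)
Definition linf_norm (M : nat) (x : nat -> R) : R :=
  fold_right Rmax 0 (map (fun m => Rabs (x m)) (seq 0 M)).

(* The linear functional on l^inf_M with coefficient vector t:
   x |-> sum_{m<M} t m * x m  (every element of L(l^inf_M, R) is of this form). *)
Definition functional (M : nat) (t : nat -> R) (x : nat -> R) : R :=
  rsum M (fun m => t m * x m).

Definition lattice_sq (k : nat) (xs : nat -> nat -> R) : nat -> R :=
  fun m => sqrt (rsum k (fun i => Rsqr (Rabs (xs i m)))).

Definition op_A (M : nat) (t : nat -> nat -> R) (x : nat -> R) : nat -> R :=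
  fun n => functional M (t n) x.

(* C satisfies the l^2-bound inequality for the family {T_n : n < N};
   S_i = T_(sigma i).  The target lattice is R, where the norm of
   (sum |S_i x_i|^2)^{1/2} is its absolute value. *)
Definition R2_admissible (M N : nat) (t : nat -> nat -> R) (C : R) : Prop :=
  forall (k : nat) (sigma : nat -> nat) (xs : nat -> nat -> R),
    (forall i, (i < k)%nat -> (sigma i < N)%nat) ->
    Rabs (sqrt (rsum k (fun i => Rsqr (Rabs (functional M (t (sigma i)) (xs i))))))
      <= C * linf_norm M (lattice_sq k xs).

Definition dual_ball (M : nat) (y : nat -> R) : Prop :=
  forall x : nat -> R, Rabs (functional M y x) <= linf_norm M x.

Definition weak_set (M k : nat) (xs : nat -> nat -> R) : R -> Prop :=
  fun s => exists y, dual_ball M y /\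
    s = sqrt (rsum k (fun n => Rsqr (Rabs (functional M y (xs n))))).

Definition pi2_admissible (M N : nat) (t : nat -> nat -> R) (C : R) : Prop :=
  forall (k : nat) (xs : nat -> nat -> R) (s : R),
    is_lub (weak_set M k xs) s ->
    sqrt (rsum k (fun n => Rsqr (linf_norm N (op_A M t (xs n))))) <= C * s.

Definition is_least (E : R -> Prop) (c : R) : Prop :=
  E c /\ forall C, E C -> c <= C.

(* The supremum defining the weak l^2 norm of x_1, ..., x_k in l^inf_M is
   exactly || (sum_i |x_i|^2)^{1/2} ||_inf: functionals in the dual ball of
   l^inf_M have l^1 norm <= 1, Jensen's inequality bounds each of them by
   this quantity, and the coordinate evaluations attain it.  Since the
   l^inf_N norm of A x_i is |T_n x_i| for a maximising n, choosing S_i = T_n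
   turns the l^2-bound inequality into the 2-summing inequality and back, so
   both have the same admissible constants.  These form a half-line
   [c, +oo), closed because each constraint is a closed half-line. *)

From Stdlib Require Import Reals List Lra Lia Psatz IndefiniteDescription.
Open Scope R_scope.

Lemma rsum_ext k f g : (forall i, (i < k)%nat -> f i = g i) -> rsum k f = rsum k g.
Proof.
  induction k as [|k IH]; simpl; intros H; [reflexivity|].
  rewrite IH, H; [reflexivity | lia | intros; apply H; lia].
Qed.

Lemma rsum_le k f g : (forall i, (i < k)%nat -> f i <= g i) -> rsum k f <= rsum k g.
Proof.
  induction k as [|k IH]; simpl; intros H; [lra|].
  assert (rsum k f <= rsum k g) by (apply IH; intros; apply H; lia).
  assert (f k <= g k) by (apply H; lia).
  lra.
Qed.

Lemma rsum_0 k : rsum k (fun _ => 0) = 0.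
Proof. induction k as [|k IH]; simpl; [|rewrite IH]; lra. Qed.

Lemma rsum_nonneg k f : (forall i, (i < k)%nat -> 0 <= f i) -> 0 <= rsum k f.
Proof. intros H; rewrite <- (rsum_0 k); apply rsum_le; exact H. Qed.

Lemma rsum_plus k f g : rsum k (fun i => f i + g i) = rsum k f + rsum k g.
Proof. induction k as [|k IH]; simpl; [|rewrite IH]; lra. Qed.

Lemma rsum_scal k c f : rsum k (fun i => c * f i) = c * rsum k f.
Proof. induction k as [|k IH]; simpl; [|rewrite IH]; lra. Qed.

Lemma rsum_swap k M f :
  rsum k (fun i => rsum M (fun m => f i m)) = rsum M (fun m => rsum k (fun i => f i m)).
Proof.
  induction k as [|k IH]; simpl.
  - now rewrite rsum_0.
  - now rewrite IH, <- rsum_plus.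
Qed.

Lemma rsum_term_le k f a :
  (forall i, (i < k)%nat -> 0 <= f i) -> (a < k)%nat -> f a <= rsum k f.
Proof.
  induction k as [|k IH]; simpl; intros H Ha; [lia|].
  assert (0 <= rsum k f) by (apply rsum_nonneg; intros; apply H; lia).
  destruct (Nat.eq_dec a k) as [->|Hne]; [lra|].
  assert (f a <= rsum k f) by (apply IH; [intros; apply H|]; lia).
  assert (0 <= f k) by (apply H; lia).
  lra.
Qed.

Lemma Rabs_rsum_le k f : Rabs (rsum k f) <= rsum k (fun i => Rabs (f i)).
Proof.
  induction k as [|k IH]; simpl; [rewrite Rabs_R0; lra|].
  eapply Rle_trans; [apply Rabs_triang | lra].
Qed.

(* With W = sum w, S = sum w a, Q = sum w a^2 one has
   0 <= sum w (W a - S)^2 = W (W Q - S^2). *)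
Lemma rsum_weighted_Cauchy_Schwarz k w a :
  (forall i, (i < k)%nat -> 0 <= w i) ->
  Rsqr (rsum k (fun i => w i * a i))
    <= rsum k w * rsum k (fun i => w i * Rsqr (a i)).
Proof.
  intros Hw.
  set (W := rsum k w); set (S := rsum k (fun i => w i * a i));
    set (Q := rsum k (fun i => w i * Rsqr (a i))).
  assert (HW : 0 <= W) by (apply rsum_nonneg; exact Hw).
  destruct (Rle_lt_or_eq_dec _ _ HW) as [Wpos | W0].
  - assert (Hexp : rsum k (fun i => w i * Rsqr (W * a i - S)) = W * (W * Q - Rsqr S)).
    { rewrite (rsum_ext k _ (fun i => (Rsqr W * (w i * Rsqr (a i))
                                     + (- 2 * W * S) * (w i * a i)) + Rsqr S * w i))
        by (intros; unfold Rsqr; ring).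
      rewrite !rsum_plus, !rsum_scal; fold W S Q; unfold Rsqr; ring. }
    assert (0 <= W * (W * Q - Rsqr S)).
    { rewrite <- Hexp; apply rsum_nonneg; intros i Hi.
      apply Rmult_le_pos; [apply Hw; exact Hi | apply Rle_0_sqr]. }
    nra.
  - assert (S = 0) as ->.
    { unfold S; rewrite <- (rsum_0 k); apply rsum_ext; intros i Hi.
      assert (w i <= W) by (apply rsum_term_le; assumption).
      assert (0 <= w i) by (apply Hw; exact Hi).
      replace (w i) with 0 by lra; ring. }
    rewrite <- W0, Rsqr_0; lra.
Qed.

Section MaxList.
Variables (A : Type) (f : A -> R).
Hypothesis f_nonneg : forall a, 0 <= f a.

Let max_list (l : list A) : R := fold_right Rmax 0 (map f l).

Lemma max_list_nonneg l : 0 <= max_list l.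
Proof.
  unfold max_list in *.
  induction l as [|a l IH]; simpl; [lra|].
  eapply Rle_trans; [exact IH | apply Rmax_r].
Qed.

Lemma max_list_ge l a : In a l -> f a <= max_list l.
Proof.
  unfold max_list in *.
  induction l as [|b l IH]; simpl; [tauto|]; intros [-> | Ha].
  - apply Rmax_l.
  - eapply Rle_trans; [apply IH, Ha | apply Rmax_r].
Qed.

Lemma max_list_le l B : (forall a, In a l -> f a <= B) -> 0 <= B -> max_list l <= B.
Proof.
  unfold max_list in *.
  induction l as [|b l IH]; simpl; intros H HB; [exact HB|].
  apply Rmax_lub; [apply H; left; reflexivity | apply IH; auto].
Qed.

Lemma max_list_attained l : l <> nil -> exists a, In a l /\ max_list l = f a.
Proof.
  induction l as [|b l IH]; intros Hl; [congruence|].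
  destruct l as [|c l].
  - exists b; split; [left; reflexivity|]; apply Rmax_left, f_nonneg.
  - destruct IH as [a [Ha Hmax]]; [congruence|].
    change (exists a, In a (b :: c :: l) /\ Rmax (f b) (max_list (c :: l)) = f a).
    destruct (Rle_dec (f b) (max_list (c :: l))).
    + exists a; split; [right; exact Ha | rewrite Rmax_right; assumption].
    + exists b; split; [left; reflexivity | rewrite Rmax_left; lra].
Qed.

End MaxList.

Lemma linf_norm_nonneg M x : 0 <= linf_norm M x.
Proof. apply max_list_nonneg; intros; apply Rabs_pos. Qed.

Lemma linf_norm_ge M x m : (m < M)%nat -> Rabs (x m) <= linf_norm M x.
Proof.
  intros Hm; apply (max_list_ge _ (fun m => Rabs (x m))), in_seq; lia.
Qed.

Lemma linf_norm_le M x B :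
  (forall m, (m < M)%nat -> Rabs (x m) <= B) -> 0 <= B -> linf_norm M x <= B.
Proof.
  intros H; apply max_list_le; intros m Hm; apply H; apply in_seq in Hm; lia.
Qed.

Lemma linf_norm_attained M x :
  (1 <= M)%nat -> exists m, (m < M)%nat /\ linf_norm M x = Rabs (x m).
Proof.
  intros HM.
  destruct (max_list_attained _ (fun m => Rabs (x m)) (fun m => Rabs_pos (x m)) (seq 0 M))
    as [m [Hm Hmax]]; [destruct M; [lia | discriminate]|].
  exists m; split; [apply in_seq in Hm; lia | exact Hmax].
Qed.

Lemma rsum_Rsqr_abs k f : rsum k (fun i => Rsqr (Rabs (f i))) = rsum k (fun i => Rsqr (f i)).
Proof. apply rsum_ext; intros; symmetry; apply Rsqr_abs. Qed.

Lemma lattice_sq_coord_le M k xs m : (m < M)%nat ->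
  rsum k (fun i => Rsqr (xs i m)) <= Rsqr (linf_norm M (lattice_sq k xs)).
Proof.
  intros Hm.
  assert (Hsum : 0 <= rsum k (fun i => Rsqr (xs i m)))
    by (apply rsum_nonneg; intros; apply Rle_0_sqr).
  assert (Hcoord := linf_norm_ge M (lattice_sq k xs) m Hm).
  unfold lattice_sq in Hcoord at 1; rewrite rsum_Rsqr_abs, Rabs_pos_eq in Hcoord
    by apply sqrt_pos.
  rewrite <- (Rsqr_sqrt _ Hsum).
  apply Rsqr_incr_1; [exact Hcoord | apply sqrt_pos | apply linf_norm_nonneg].
Qed.

Definition l1_norm (M : nat) (y : nat -> R) : R := rsum M (fun m => Rabs (y m)).

Lemma l1_norm_nonneg M y : 0 <= l1_norm M y.
Proof. apply rsum_nonneg; intros; apply Rabs_pos. Qed.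

Lemma functional_sq_le M y x :
  Rsqr (functional M y x) <= l1_norm M y * rsum M (fun m => Rabs (y m) * Rsqr (x m)).
Proof.
  apply Rle_trans with (Rsqr (rsum M (fun m => Rabs (y m) * Rabs (x m)))).
  - apply Rsqr_le_abs_1; rewrite (Rabs_pos_eq (rsum _ _))
      by (apply rsum_nonneg; intros; apply Rmult_le_pos; apply Rabs_pos).
    eapply Rle_trans; [apply Rabs_rsum_le|].
    right; apply rsum_ext; intros; apply Rabs_mult.
  - rewrite (rsum_ext M (fun m => Rabs (y m) * Rsqr (x m))
               (fun m => Rabs (y m) * Rsqr (Rabs (x m))))
      by (intros; rewrite <- Rsqr_abs; reflexivity).
    apply rsum_weighted_Cauchy_Schwarz; intros; apply Rabs_pos.
Qed.

Lemma functional_lattice_sq_le M k y xs :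
  rsum k (fun n => Rsqr (functional M y (xs n)))
    <= Rsqr (l1_norm M y) * Rsqr (linf_norm M (lattice_sq k xs)).
Proof.
  set (L := linf_norm M (lattice_sq k xs)).
  assert (Hy := l1_norm_nonneg M y).
  apply Rle_trans with
    (l1_norm M y * rsum M (fun m => Rabs (y m) * rsum k (fun n => Rsqr (xs n m)))).
  - eapply Rle_trans; [apply rsum_le; intros n _; apply functional_sq_le|].
    rewrite rsum_scal, rsum_swap; right; f_equal.
    apply rsum_ext; intros; apply rsum_scal.
  - replace (Rsqr (l1_norm M y) * Rsqr L)
      with (l1_norm M y * rsum M (fun m => Rabs (y m) * Rsqr L))
      by (rewrite (rsum_ext _ _ (fun m => Rsqr L * Rabs (y m))) by (intros; ring);
          rewrite rsum_scal; unfold l1_norm, Rsqr; ring).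
    apply Rmult_le_compat_l; [exact Hy|].
    apply rsum_le; intros m Hm; apply Rmult_le_compat_l; [apply Rabs_pos|].
    apply lattice_sq_coord_le, Hm.
Qed.

Definition sign_vector (y : nat -> R) : nat -> R :=
  fun m => if Rle_dec 0 (y m) then 1 else -1.

Lemma dual_ball_l1_norm_le M y : dual_ball M y -> l1_norm M y <= 1.
Proof.
  intros Hy.
  assert (Hsign : functional M y (sign_vector y) = l1_norm M y).
  { apply rsum_ext; intros m _; unfold sign_vector.
    destruct (Rle_dec 0 (y m)); [rewrite Rabs_pos_eq | rewrite Rabs_left]; lra. }
  assert (Hnorm : linf_norm M (sign_vector y) <= 1).
  { apply linf_norm_le; [|lra]; intros m _; unfold sign_vector.
    destruct (Rle_dec 0 (y m)); [rewrite Rabs_R1 | rewrite Rabs_left]; lra. }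
  rewrite <- Hsign.
  eapply Rle_trans; [apply Rle_abs | eapply Rle_trans; [apply Hy | exact Hnorm]].
Qed.

Definition unit_vector (m : nat) : nat -> R := fun j => if Nat.eq_dec j m then 1 else 0.

Lemma functional_unit_vector M m x : (m < M)%nat -> functional M (unit_vector m) x = x m.
Proof.
  unfold functional, unit_vector.
  induction M as [|M IH]; simpl; intros Hm; [lia|].
  destruct (Nat.eq_dec M m) as [<- | Hne].
  - rewrite (rsum_ext M _ (fun _ => 0)), rsum_0; [ring|].
    intros i Hi; destruct (Nat.eq_dec i M); [lia | ring].
  - rewrite IH by lia; ring.
Qed.

Lemma unit_vector_dual_ball M m : (m < M)%nat -> dual_ball M (unit_vector m).
Proof. intros Hm x; rewrite functional_unit_vector by exact Hm; apply linf_norm_ge, Hm. Qed.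

Lemma weak_set_lub M k xs :
  (1 <= M)%nat -> is_lub (weak_set M k xs) (linf_norm M (lattice_sq k xs)).
Proof.
  intros HM; set (L := linf_norm M (lattice_sq k xs)).
  assert (HL : 0 <= L) by apply linf_norm_nonneg.
  split.
  - intros s [y [Hy ->]].
    assert (Hbound := functional_lattice_sq_le M k y xs); fold L in Hbound.
    assert (Rsqr (l1_norm M y) <= 1).
    { rewrite <- Rsqr_1; apply Rsqr_incr_1;
        [apply dual_ball_l1_norm_le, Hy | apply l1_norm_nonneg | lra]. }
    rewrite <- (sqrt_Rsqr L HL), rsum_Rsqr_abs; apply sqrt_le_1_alt.
    eapply Rle_trans; [exact Hbound|].
    rewrite <- (Rmult_1_l (Rsqr L)) at 2; apply Rmult_le_compat_r; [apply Rle_0_sqr | assumption].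
  - intros b Hb.
    destruct (linf_norm_attained M (lattice_sq k xs) HM) as [m [Hm Hmax]].
    unfold L; rewrite Hmax, Rabs_pos_eq by apply sqrt_pos.
    apply Hb; exists (unit_vector m); split; [apply unit_vector_dual_ball, Hm|].
    unfold lattice_sq; f_equal; apply rsum_ext; intros.
    rewrite functional_unit_vector by exact Hm; reflexivity.
Qed.

Lemma linf_norm_argmax N (v : nat -> nat -> R) : (1 <= N)%nat ->
  exists sigma : nat -> nat,
    forall n, (sigma n < N)%nat /\ linf_norm N (v n) = Rabs (v n (sigma n)).
Proof.
  intros HN; apply (functional_choice (fun n j => (j < N)%nat /\ linf_norm N (v n) = Rabs (v n j))).
  intros n; apply linf_norm_attained, HN.
Qed.

Lemma R2_admissible_iff_pi2_admissible M N t C : (1 <= M)%nat -> (1 <= N)%nat ->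
  R2_admissible M N t C <-> pi2_admissible M N t C.
Proof.
  intros HM HN; split.
  - intros HR2 k xs s Hs.
    rewrite (is_lub_u _ _ _ Hs (weak_set_lub M k xs HM)).
    destruct (linf_norm_argmax N (fun n => op_A M t (xs n)) HN) as [sigma Hsigma].
    assert (Hk := HR2 k sigma xs (fun i _ => proj1 (Hsigma i))).
    rewrite Rabs_pos_eq in Hk by apply sqrt_pos.
    eapply Rle_trans; [|exact Hk]; right; f_equal.
    apply rsum_ext; intros n _; rewrite (proj2 (Hsigma n)); reflexivity.
  - intros Hpi2 k sigma xs Hsigma.
    rewrite Rabs_pos_eq by apply sqrt_pos.
    eapply Rle_trans; [|apply (Hpi2 k xs _ (weak_set_lub M k xs HM))].
    apply sqrt_le_1_alt, rsum_le; intros i Hi.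
    apply Rsqr_incr_1; [| apply Rabs_pos | apply linf_norm_nonneg].
    apply (linf_norm_ge N (op_A M t (xs i))), Hsigma, Hi.
Qed.

Lemma R2_admissible_exists M N t : exists C, R2_admissible M N t C.
Proof.
  set (K := rsum N (fun j => Rsqr (l1_norm M (t j)))).
  assert (HK : 0 <= K) by (apply rsum_nonneg; intros; apply Rle_0_sqr).
  exists (sqrt K); intros k sigma xs Hsigma.
  set (L := linf_norm M (lattice_sq k xs)).
  assert (HL : 0 <= L) by apply linf_norm_nonneg.
  rewrite Rabs_pos_eq by apply sqrt_pos.
  rewrite <- (sqrt_Rsqr L HL), <- sqrt_mult_alt, rsum_Rsqr_abs by exact HK.
  apply sqrt_le_1_alt.
  apply Rle_trans with
    (rsum k (fun i => rsum N (fun j => Rsqr (functional M (t j) (xs i))))).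
  { apply rsum_le; intros i Hi.
    apply (rsum_term_le N (fun j => Rsqr (functional M (t j) (xs i))));
      [intros; apply Rle_0_sqr | apply Hsigma, Hi]. }
  rewrite rsum_swap; unfold K; rewrite Rmult_comm, <- rsum_scal.
  apply rsum_le; intros j _; rewrite Rmult_comm.
  apply functional_lattice_sq_le.
Qed.

Lemma R2_admissible_nonneg M N t C : (1 <= M)%nat -> (1 <= N)%nat ->
  R2_admissible M N t C -> 0 <= C.
Proof.
  intros HM HN HC.
  set (ones := fun _ _ : nat => 1).
  assert (Hones := HC 1%nat (fun _ => 0%nat) ones (fun _ _ => HN)).
  assert (Hnorm : 1 <= linf_norm M (lattice_sq 1 ones)).
  { eapply Rle_trans; [|apply (linf_norm_ge M _ 0%nat HM)].
    unfold lattice_sq, ones; simpl.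
    rewrite Rplus_0_l, Rabs_R1, Rsqr_1, sqrt_1, Rabs_R1; lra. }
  assert (Habs := Rabs_pos (sqrt (rsum 1 (fun i => Rsqr (Rabs (functional M (t 0%nat) (ones i))))))).
  nra.
Qed.

Lemma least_constant_exists (P : R -> Prop) (S : R -> R -> Prop) :
  (forall C, P C <-> forall a b, S a b -> b <= C * a) ->
  (forall a b, S a b -> 0 <= a) ->
  (exists C, P C) -> (exists c0, forall C, P C -> c0 <= C) ->
  exists c, is_least P c.
Proof.
  intros HP Ha [C0 HC0] [c0 Hc0].
  set (F := fun x => P (- x)).
  assert (Hbound : bound F) by (exists (- c0); intros x Hx; apply Hc0 in Hx; lra).
  assert (Hne : exists x, F x) by (exists (- C0); unfold F; rewrite Ropp_involutive; exact HC0).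
  destruct (completeness F Hbound Hne) as [u [Hub Hlub]].
  exists (- u); split.
  - apply HP; intros a b Hab.
    destruct (Rle_lt_or_eq_dec _ _ (Ha a b Hab)) as [Hpos | <-].
    + assert (Hba : b / a <= - u).
      { enough (u <= - (b / a)) by lra.
        apply Hlub; intros x Hx.
        assert (b <= - x * a) by (apply (HP (- x)); assumption).
        enough (b / a <= - x) by lra.
        apply Rmult_le_reg_r with a; [exact Hpos|].
        unfold Rdiv; rewrite Rmult_assoc, Rinv_l, Rmult_1_r by lra; assumption. }
      apply Rmult_le_compat_r with (r := a) in Hba; [|lra].
      unfold Rdiv in Hba; rewrite Rmult_assoc, Rinv_l, Rmult_1_r in Hba by lra; exact Hba.
    + assert (b <= C0 * 0) by (apply (HP C0); assumption). lra.
  - intros C HC.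
    assert (- C <= u) by (apply Hub; unfold F; rewrite Ropp_involutive; exact HC).
    lra.
Qed.

Lemma R2_admissible_least M N t : (1 <= M)%nat -> (1 <= N)%nat ->
  exists c, is_least (R2_admissible M N t) c.
Proof.
  intros HM HN.
  apply (least_constant_exists _ (fun a b => exists k sigma xs,
    (forall i, (i < k)%nat -> (sigma i < N)%nat) /\ a = linf_norm M (lattice_sq k xs) /\
    b = Rabs (sqrt (rsum k (fun i => Rsqr (Rabs (functional M (t (sigma i)) (xs i))))))));
    [| | apply R2_admissible_exists
       | exists 0; intros C; apply R2_admissible_nonneg; assumption].
  - intros C; split.
    + intros HC a b (k & sigma & xs & Hsigma & -> & ->); apply HC, Hsigma.
    + intros HC k sigma xs Hsigma; apply HC; exists k, sigma, xs; auto.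
  - intros a b (k & sigma & xs & _ & -> & _); apply linf_norm_nonneg.
Qed.

Theorem mainTheorem12 (M N : nat) (t : nat -> nat -> R) :
  (1 <= M)%nat -> (1 <= N)%nat ->
  exists c, is_least (R2_admissible M N t) c /\ is_least (pi2_admissible M N t) c.
Proof.
  intros HM HN.
  destruct (R2_admissible_least M N t HM HN) as [c [Hc Hleast]].
  exists c; split; [split; assumption|]; split.
  - apply R2_admissible_iff_pi2_admissible; assumption.
  - intros C HC; apply Hleast, (R2_admissible_iff_pi2_admissible M N t C HM HN), HC.
Qed.
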